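(* Let $\Gamma$ be a countably infinite discrete group and let $\boldsymbol{b}=\Gamma\curvearrowright^b (Y,\nu)$ be a non-trivial totally ergodic measure preserving action of $\Gamma$. (i) If $C\subseteq\Gamma$ is a subset such that $\nu(\{y\in Y : C\subseteq \Gamma_y\})>0$, then the subgroup $\langle C\rangle$ generated by $C$ is finite. (ii) For $\nu$-almost every $y\in Y$, the stabilizer $\Gamma_y$ is locally finite.
   Context: A measure preserving action $\Gamma\curvearrowright^b (Y,\nu)$ consists of a standard Borel space $Y$, a Borel probability measure $\nu$, and a Borel $\nu$-preserving action of $\Gamma$ on $Y$. It is non-trivial if $\nu$ is not a point mass, and totally ergodic if its restriction to every infinite subgroup of $\Gamma$ is ergodic. The stabilizer is $\Gamma_y=\{\gamma\in\Gamma:\gamma^b y=y\}$. A group is locally finite if every finitely generated subgroup is finite. *)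

From HB Require Import structures.
From mathcomp Require Import all_boot all_order all_algebra.
From mathcomp Require Import monoid.
From mathcomp Require Import all_classical all_reals all_analysis.

Set Implicit Arguments.
Unset Strict Implicit.
Unset Printing Implicit Defensive.

Import Order.TTheory GRing.Theory Num.Theory.
Local Open Scope classical_set_scope.
Local Open Scope ring_scope.

Definition is_subgroup (G : groupType) (H : set G) : Prop :=
  H (@monoid.one G) /\ (forall x y, H x -> H y -> H (monoid.mul x y)) /\
  (forall x, H x -> H (monoid.inv x)).

Definition gen_subgroup (G : groupType) (C : set G) : set G :=
  [set g | forall H : set G, is_subgroup H -> C `<=` H -> H g].

Definition locally_finite (G : groupType) (S : set G) : Prop :=
  forall F : set G, finite_set F -> F `<=` S -> finite_set (gen_subgroup F).

Definition countably_infinite (G : groupType) : Prop :=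
  countable [set: G] /\ infinite_set [set: G].

(* Standard Borel spaces: Y is Borel isomorphic to a Borel subset of
   the real line (Kuratowski's characterisation). *)
Definition standard_borel (R : realType) d (Y : measurableType d) : Prop :=
  exists (f : Y -> R) (B : set R),
    measurable B /\ measurable_fun [set: Y] f /\
    set_inj [set: Y] f /\ f @` [set: Y] = B /\
    (forall A : set Y, measurable A -> measurable (f @` A)).

Definition mp_action (G : groupType) (R : realType) d (Y : measurableType d)
    (nu : {measure set Y -> \bar R}) (b : G -> Y -> Y) : Prop :=
  (forall y, b (@monoid.one G) y = y) /\
  (forall g h y, b (monoid.mul g h) y = b g (b h y)) /\
  (forall g, measurable_fun [set: Y] (b g)) /\
  (forall g A, measurable A -> nu (b g @^-1` A) = nu A).

Definition nontrivial_measure (R : realType) d (Y : measurableType d)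
    (nu : {measure set Y -> \bar R}) : Prop :=
  forall y : Y, exists A, measurable A /\ nu A <> \d_y A.

Definition ergodic_on (G : groupType) (R : realType) d (Y : measurableType d)
    (nu : {measure set Y -> \bar R}) (b : G -> Y -> Y) (H : set G) : Prop :=
  forall A : set Y, measurable A ->
    (forall h, H h -> b h @^-1` A = A) ->
    nu A = 0%E \/ nu A = 1%E.

Definition totally_ergodic (G : groupType) (R : realType) d (Y : measurableType d)
    (nu : {measure set Y -> \bar R}) (b : G -> Y -> Y) : Prop :=
  forall H : set G, is_subgroup H -> infinite_set H -> ergodic_on nu b H.

Definition stabilizer (G : groupType) (Y : Type) (b : G -> Y -> Y) (y : Y)
  : set G := [set g | b g y = y].

From HB Require Import structures.
From mathcomp Require Import all_boot all_order all_algebra.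
From mathcomp Require Import monoid.
From mathcomp Require Import all_classical all_reals all_analysis.
From mathcomp Require Import lra.

Set Implicit Arguments.
Unset Strict Implicit.
Unset Printing Implicit Defensive.

Import Order.TTheory GRing.Theory Num.Theory.
Local Open Scope classical_set_scope.
Local Open Scope ring_scope.

(* Let A be the set of points fixed by C; it is fixed pointwise by <C>. If <C>
   were infinite, total ergodicity would force nu A = 1, and then, for every
   measurable D, the <C>-invariant set D `&` A would make nu D equal 0 or 1.
   On a standard Borel space a {0,1}-valued probability is a point mass: push
   it to the real line by a Borel embedding, where it is concentrated at the
   supremum of the points at which its distribution function vanishes. This
   contradicts non-triviality and proves (i). Part (ii) follows because
   Gamma has only countably many finite subsets F, and the fixed set of each
   F generating an infinite subgroup is null by (i). *)

Lemma measurable_preimage d d' (X : measurableType d) (Z : measurableType d')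
    (f : X -> Z) (B : set Z) :
  measurable_fun setT f -> measurable B -> measurable (f @^-1` B).
Proof. by move=> mf mB; rewrite -[_ @^-1` _]setTI; exact: mf. Qed.

Section GeneratedSubgroup.
Variable G : groupType.

Lemma gen_subgroup_subgroup (C : set G) : is_subgroup (gen_subgroup C).
Proof.
split; first by move=> H [].
split; first by move=> x y Cx Cy H sgH CH; apply: sgH.2.1; [exact: Cx|exact: Cy].
by move=> x Cx H sgH CH; apply: sgH.2.2; exact: Cx.
Qed.

Lemma gen_subgroup_sub (C H : set G) :
  is_subgroup H -> C `<=` H -> gen_subgroup C `<=` H.
Proof. by move=> sgH CH x; apply. Qed.

End GeneratedSubgroup.

Definition fixed_set (G : groupType) (Y : Type) (b : G -> Y -> Y) (C : set G)
  : set Y := [set y | C `<=` stabilizer b y].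

Section Stabilizers.
Variables (G : groupType) (Y : Type) (b : G -> Y -> Y).
Hypotheses (act1 : forall y, b 1%g y = y)
  (actM : forall g h y, b (g * h)%g y = b g (b h y)).

Lemma stabilizer_subgroup (y : Y) : is_subgroup (stabilizer b y).
Proof.
split; first exact: act1.
split; first by move=> g h gy hy; rewrite /stabilizer /= actM hy gy.
by move=> g gy; rewrite /stabilizer /= -{1}gy -actM mulVg act1.
Qed.

Lemma fixed_set_gen_subgroup (C : set G) :
  fixed_set b (gen_subgroup C) = fixed_set b C.
Proof.
apply/seteqP; split => y Cy g Cg.
  by apply: Cy => H _; apply.
exact: gen_subgroup_sub (stabilizer_subgroup y) Cy _ Cg.
Qed.

Lemma preimage_setI_fixed_set (H : set G) (D : set Y) (h : G) :
  is_subgroup H -> H h -> b h @^-1` (D `&` fixed_set b H) = D `&` fixed_set b H.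
Proof.
move=> sgH Hh; apply/seteqP; split => y /=; last by move=> [Dy Hy]; rewrite Hy.
move=> [Dhy Hhy]; suff <- : b h y = y by [].
by rewrite -[in RHS](act1 y) -(mulVg h) actM Hhy //; exact: sgH.2.2.
Qed.

End Stabilizers.

Section ProbabilityZeroOne.
Context (R : realType) d (Y : measurableType d) (nu : probability Y R).

Lemma probability_setI_full (A D : set Y) :
  measurable A -> measurable D -> nu A = 1%E -> nu (D `&` A) = nu D.
Proof.
move=> mA mD nuA.
rewrite [RHS](measureDI _ mD mA) [X in (X + _)%E](_ : _ = 0%E) ?add0e //.
have nuCA : nu (~` A) = 0%E by rewrite probability_setC // nuA subee.
apply/eqP; rewrite -measure_le0 -nuCA.
by apply: le_measure; rewrite ?inE; [exact: measurableD|exact: measurableC|move=> y []].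
Qed.

Lemma zero_one_cover (F : nat -> set Y) :
  (forall n, measurable (F n)) -> (forall n, nu (F n) = 0%E \/ nu (F n) = 1%E) ->
  \bigcup_n F n = setT -> exists n, nu (F n) = 1%E.
Proof.
move=> mF F01 FT; apply: contrapT => nF1.
have F0 n : nu.-negligible (F n).
  by apply/negligibleP => //; case: (F01 n) => // F1; exfalso; apply: nF1; exists n.
have : nu (\bigcup_n F n) = 0%E.
  exact: measure_negligible (bigcupT_measurable _ mF) (negligible_bigcup F0).
by rewrite FT probability_setT => /eqP; rewrite onee_eq0.
Qed.

Lemma probability_set1_dirac (y0 : Y) :
  measurable [set y0] -> nu [set y0] = 1%E -> forall A, measurable A -> nu A = \d_y0 A.
Proof.
move=> my0 nuy0 A mA; rewrite diracE.
have [Ay0|nAy0] := pselect (A y0).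
  rewrite mem_set //; apply/eqP; rewrite eq_le probability_le1 //= -nuy0.
  by apply: le_measure; rewrite ?inE // => y ->.
have nuCy0 : nu (~` [set y0]) = 0%E by rewrite probability_setC // nuy0 subee.
rewrite memNset //; apply/eqP; rewrite -measure_le0 -nuCy0.
apply: le_measure; rewrite ?inE; [by []|exact: measurableC|].
by move=> y Ay /= yy0; apply: nAy0; rewrite -yy0.
Qed.

Lemma probability_eq1_negligibleC (A : set Y) :
  measurable A -> nu A = 1%E <-> nu.-negligible (~` A).
Proof.
move=> mA; split => [nuA|nCA].
  have nuCA : nu (~` A) = 0%E by rewrite probability_setC // nuA subee.
  by exists (~` A); split => //; exact: measurableC.
have nuCA : nu (~` A) = 0%E := measure_negligible (measurableC mA) nCA.
by rewrite -[A]setCK probability_setC ?nuCA ?sube0 //; exact: measurableC.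
Qed.

End ProbabilityZeroOne.

Section ZeroOneDistribution.
Context (R : realType) d (Y : measurableType d) (nu : probability Y R) (f : Y -> R).
Hypothesis mf : measurable_fun setT f.
Hypothesis cdf01 : forall x : R,
  nu [set y | f y <= x] = 0%E \/ nu [set y | f y <= x] = 1%E.

Let measurable_le (x : R) : measurable [set y | f y <= x].
Proof.
by rewrite -preimage_itvNyc; apply: measurable_preimage mf _; exact: measurable_itv.
Qed.

Let gt_setC (x : R) : [set y | x < f y] = ~` [set y | f y <= x].
Proof. by apply/seteqP; split => y /=; rewrite ltNge => /negP. Qed.

Let null_cdf := [set x : R | nu [set y | f y <= x] = 0%E].

Lemma has_sup_null_cdf : has_sup null_cdf.
Proof.
have nat_ub (r : R) : exists n : nat, r <= n%:R.
  exists (Num.bound `|r|).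
  exact: le_trans (ler_norm _) (ltW (archi_boundP (normr_ge0 _))).
have [n cdfn1] : exists n : nat, nu [set y | f y <= n%:R] = 1%E.
  apply: zero_one_cover => //; apply/seteqP; split => // y _.
  by have [n ?] := nat_ub (f y); exists n.
have [m cdfm0] : exists m : nat, nu [set y | - m%:R < f y] = 1%E.
  apply: zero_one_cover => [m|m|].
  - by rewrite gt_setC; exact: measurableC.
  - rewrite gt_setC probability_setC //.
    by case: (cdf01 (- m%:R)) => ->; [right; rewrite sube0|left; rewrite subee].
  - apply/seteqP; split => // y _; have [m ?] := nat_ub (- f y + 1).
    by exists m => //=; lra.
split.
  exists (- m%:R); case: (cdf01 (- m%:R)) => // cdf1.
  move: cdfm0; rewrite gt_setC probability_setC // cdf1 subee // => /eqP.
  by rewrite eq_sym onee_eq0.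
exists n%:R => x cdfx0; rewrite leNgt; apply/negP => ltnx.
have : (nu [set y | (f y <= n%:R)%R] <= nu [set y | (f y <= x)%R])%E.
  by apply: le_measure; rewrite ?inE // => y /= fyn; exact: le_trans fyn (ltW ltnx).
by rewrite cdfn1 cdfx0 lee_fin ler10.
Qed.

Lemma negligible_lt_sup_null_cdf : nu.-negligible [set y | f y < sup null_cdf].
Proof.
apply: (negligibleS _ (negligible_bigcup
  (F := fun k => [set y | f y <= sup null_cdf - k.+1%:R^-1]) _)).
  move=> y /= /ltr_add_invr [k fyk]; exists k => //=; rewrite lerBrDr; exact: ltW.
move=> k; have e_gt0 : 0 < k.+1%:R^-1 :> R by rewrite invr_gt0.
have [r r_null ltr] := sup_adherent e_gt0 has_sup_null_cdf.
exists [set y | f y <= r]; split => // y /= fyk; exact: le_trans fyk (ltW ltr).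
Qed.

Lemma negligible_gt_sup_null_cdf : nu.-negligible [set y | sup null_cdf < f y].
Proof.
apply: (negligibleS _ (negligible_bigcup
  (F := fun k => [set y | sup null_cdf + k.+1%:R^-1 < f y]) _)).
  by move=> y /= /ltr_add_invr [k fyk]; exists k.
move=> k; rewrite gt_setC; apply/(probability_eq1_negligibleC nu (measurable_le _)).
case: (cdf01 (sup null_cdf + k.+1%:R^-1)) => // cdf0; exfalso.
have := sup_upper_bound has_sup_null_cdf cdf0.
by rewrite gerDl leNgt invr_gt0 ltr0Sn.
Qed.

Lemma zero_one_cdf_atom : exists t, nu (f @^-1` [set t]) = 1%E.
Proof.
exists (sup null_cdf).
have matom : measurable (f @^-1` [set sup null_cdf]).
  by apply: measurable_preimage mf _; exact: measurable_set1.
apply/(probability_eq1_negligibleC nu matom).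
apply: negligibleS (negligibleU negligible_lt_sup_null_cdf negligible_gt_sup_null_cdf).
by move=> y /= /eqP; rewrite neq_lt => /orP[]; [left|right].
Qed.

End ZeroOneDistribution.

Lemma zero_one_probability_dirac (R : realType) d (Y : measurableType d)
    (nu : probability Y R) (f : Y -> R) :
  measurable_fun setT f -> set_inj setT f ->
  (forall A, measurable A -> nu A = 0%E \/ nu A = 1%E) ->
  exists y0, forall A, measurable A -> nu A = \d_y0 A.
Proof.
move=> mf finj nu01.
have [|t atom1] := @zero_one_cdf_atom _ _ _ nu f mf.
  move=> x; apply: nu01; rewrite -preimage_itvNyc.
  by apply: measurable_preimage mf _; exact: measurable_itv.
have [y0 fy0] : exists y0, f y0 = t.
  apply: contrapT => noy0; move: atom1.
  suff -> : f @^-1` [set t] = set0 by rewrite measure0 => /eqP; rewrite eq_sym onee_eq0.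
  by apply/seteqP; split => // y /= fyt; apply: noy0; exists y.
have atom_y0 : f @^-1` [set t] = [set y0].
  apply/seteqP; split => y /=; last by move=> ->.
  by move=> fyt; apply: finj; rewrite ?inE // fyt fy0.
exists y0; apply: probability_set1_dirac; rewrite -atom_y0 //.
by apply: measurable_preimage mf _; exact: measurable_set1.
Qed.

Section StandardBorelFixedPoints.
Context (R : realType) d (Y : measurableType d) (f : Y -> R).
Hypotheses (mf : measurable_fun setT f) (finj : set_inj setT f).

Lemma measurable_fixpoints (u : Y -> Y) :
  measurable_fun setT u -> measurable [set y | u y = y].
Proof.
move=> mu; have -> : [set y | u y = y] = (fun y => f (u y) - f y) @^-1` [set 0].
  apply/seteqP; split => y /=; first by move=> ->; rewrite subrr.
  by move/eqP; rewrite subr_eq0 => /eqP fuy; apply: finj; rewrite ?inE.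
apply: measurable_preimage (measurable_set1 _).
exact: measurable_realfun.measurable_funB (measurableT_comp mf mu) mf.
Qed.

Lemma measurable_fixed_set (G : groupType) (b : G -> Y -> Y) (C : set G) :
  countable [set: G] -> (forall g, measurable_fun setT (b g)) ->
  measurable (fixed_set b C).
Proof.
move=> cntG mb.
have -> : fixed_set b C = \bigcap_(g in C) [set y | b g y = y].
  by apply/seteqP; split => y /= Cy g Cg; exact: Cy.
rewrite -[X in measurable X]setCK setC_bigcap bigcup_mkcond.
apply/measurableC/countable_bigcupT_measurable => // g.
case: ifP => _; last exact: measurable0.
exact/measurableC/measurable_fixpoints.
Qed.

End StandardBorelFixedPoints.

Section ErgodicFixedSet.
Context (G : groupType) (R : realType) d (Y : measurableType d)
  (nu : probability Y R) (b : G -> Y -> Y) (H : set G).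
Hypotheses (act1 : forall y, b 1%g y = y)
  (actM : forall g h y, b (g * h)%g y = b g (b h y)).
Hypotheses (sgH : is_subgroup H) (ergH : ergodic_on nu b H)
  (mfixH : measurable (fixed_set b H)).

Lemma ergodic_fixed_set_eq1 :
  (0 < nu (fixed_set b H))%E -> nu (fixed_set b H) = 1%E.
Proof.
move=> fixH_gt0; case: (ergH mfixH) => [h Hh|fixH0|//].
  rewrite -[in RHS](setTI (fixed_set b H)).
  by rewrite -(preimage_setI_fixed_set act1 actM _ sgH Hh) setTI.
by move: fixH_gt0; rewrite fixH0 ltxx.
Qed.

Lemma ergodic_zero_one : nu (fixed_set b H) = 1%E ->
  forall D, measurable D -> nu D = 0%E \/ nu D = 1%E.
Proof.
move=> fixH1 D mD; rewrite -(probability_setI_full mfixH mD fixH1).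
apply: ergH; first exact: measurableI.
by move=> h Hh; exact: preimage_setI_fixed_set.
Qed.

End ErgodicFixedSet.

Lemma nontrivial_not_zero_one (R : realType) d (Y : measurableType d)
    (nu : probability Y R) (f : Y -> R) :
  measurable_fun setT f -> set_inj setT f -> nontrivial_measure nu ->
  ~ (forall A, measurable A -> nu A = 0%E \/ nu A = 1%E).
Proof.
move=> mf finj ntriv /(zero_one_probability_dirac mf finj) [y0 dirac_y0].
by have [A [mA]] := ntriv y0; apply; exact: dirac_y0.
Qed.

Lemma negligible_countable_bigcup d (Y : measurableType d) (R : realType)
    (mu : {measure set Y -> \bar R}) (I : Type) (S : set I) (F : I -> set Y) :
  countable S -> (forall i, S i -> mu.-negligible (F i)) ->
  mu.-negligible (\bigcup_(i in S) F i).
Proof.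
move=> /countable_injP [g ginj] negF.
apply: (negligibleS _ (negligible_bigcup
  (F := fun n => \bigcup_(i in [set i | S i /\ g i = n]) F i) _)).
  by move=> y [i Si Fiy]; exists (g i) => //; exists i.
move=> n; have [[i [Si gin]]|noi] := pselect (exists i, S i /\ g i = n).
  apply: negligibleS (negF i Si) => y [j [Sj gjn] Fjy].
  by rewrite [i](ginj _ _ _ _ (etrans gin (esym gjn))) ?inE.
by apply: negligibleS (negligible_set0 mu) => y [i Si]; exfalso; apply: noi; exists i.
Qed.

Lemma ae_locally_finite_stabilizer (G : groupType) (R : realType) d
    (Y : measurableType d) (mu : {measure set Y -> \bar R}) (b : G -> Y -> Y) :
  countable [set: G] -> (forall C, measurable (fixed_set b C)) ->
  (forall C, (0 < mu (fixed_set b C))%E -> finite_set (gen_subgroup C)) ->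
  {ae mu, forall y, locally_finite (stabilizer b y)}.
Proof.
move=> cntG mfix finite_gen.
pose bad := [set F : set G |
  (F `<=` setT /\ finite_set F) /\ infinite_set (gen_subgroup F)].
have cnt_bad : countable bad.
  apply: sub_countable (countable_finite_subset cntG).
  by apply: subset_card_le => F [].
apply: negligibleS (negligible_countable_bigcup (F := fixed_set b) cnt_bad _).
  move=> y /= not_lf; apply: contrapT => no_bad; apply: not_lf => F finF Fy.
  by apply: contrapT => infF; apply: no_bad; exists F.
move=> F [_ infF]; apply/negligibleP => //.
apply/eqP; rewrite eq_le measure_ge0 andbT leNgt; apply/negP => gt0.
by apply: infF; exact: finite_gen.
Qed.

Lemma finite_gen_subgroup_of_fixed_set (Gamma : groupType) (R : realType) d
    (Y : measurableType d) (nu : probability Y R) (b : Gamma -> Y -> Y)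
    (f : Y -> R) :
  countable [set: Gamma] -> measurable_fun setT f -> set_inj setT f ->
  mp_action nu b -> nontrivial_measure nu -> totally_ergodic nu b ->
  forall C, (0 < nu (fixed_set b C))%E -> finite_set (gen_subgroup C).
Proof.
move=> cntGamma mf finj [act1 [actM [mb _]]] ntriv TE C fixC_gt0.
apply: contrapT => infC.
have sgC := gen_subgroup_subgroup C.
have mfixC := measurable_fixed_set mf finj (gen_subgroup C) cntGamma mb.
have ergC := TE _ sgC infC.
rewrite -(fixed_set_gen_subgroup act1 actM) in fixC_gt0.
apply: (nontrivial_not_zero_one mf finj ntriv).
exact: ergodic_zero_one act1 actM sgC ergC mfixC
  (ergodic_fixed_set_eq1 act1 actM sgC ergC mfixC fixC_gt0).
Qed.

Theorem lemma3p1 (Gamma : groupType) (R : realType) (d : measure_display)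
    (Y : measurableType d) (nu : probability Y R) (b : Gamma -> Y -> Y) :
  countably_infinite Gamma ->
  standard_borel R Y ->
  mp_action nu b ->
  nontrivial_measure nu ->
  totally_ergodic nu b ->
  (forall C : set Gamma,
      (0 < nu [set y | C `<=` stabilizer b y])%E ->
      finite_set (gen_subgroup C)) /\
  {ae nu, forall y, locally_finite (stabilizer b y)}.
Proof.
move=> [cntGamma _] [f [_ [_ [mf [finj _]]]]] hmp ntriv TE.
have finite_gen := finite_gen_subgroup_of_fixed_set cntGamma mf finj hmp ntriv TE.
split; first exact: finite_gen.
apply: (ae_locally_finite_stabilizer cntGamma _ finite_gen) => C.
have [_ [_ [mb _]]] := hmp.
exact: (measurable_fixed_set mf finj C cntGamma mb).
Qed.
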